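(* Let $F(d)=1/d^2$ and let $(x_n)_{n\in\mathbb Z}$ be a uniformly discrete equilibrium configuration for $F$ having a periodic tail, i.e. there exist $N\in\mathbb Z$, an integer $k\ge1$ and a real $t>0$ such that $x_{n+k}=x_n+t$ for all $n\ge N$ (or for all $n\le N$). Then the configuration is trivial, i.e. $x_{n+1}-x_n$ is constant.
   Context: A configuration is a strictly increasing bi-infinite sequence $(x_n)_{n\in\mathbb Z}$ of reals; it is uniformly discrete if there are constants $0<c\le C<\infty$ with $c\le x_n-x_{n-1}\le C$ for all $n$. The particle at $x_n$ is in equilibrium if $\sum_{m<n}F(x_n-x_m)$ and $\sum_{m>n}F(x_m-x_n)$ are both finite and equal; an equilibrium configuration is one in which every particle is in equilibrium. It is trivial if it is an arithmetic progression. *)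

From Stdlib Require Export Reals Lra Lia ZArith.
Open Scope R_scope.

Definition configuration (x : Z -> R) : Prop :=
  forall n : Z, x (n - 1)%Z < x n.

Definition uniformly_discrete (x : Z -> R) : Prop :=
  exists c C : R, 0 < c /\ c <= C /\
    forall n : Z, c <= x n - x (n - 1)%Z <= C.

(* sum_{m<n} F(x_n - x_m), enumerated as m = n - (j+1), j = 0,1,2,... *)
Definition left_force (F : R -> R) (x : Z -> R) (n : Z) (j : nat) : R :=
  F (x n - x (n - Z.of_nat (S j))%Z).

(* sum_{m>n} F(x_m - x_n), enumerated as m = n + (j+1). *)
Definition right_force (F : R -> R) (x : Z -> R) (n : Z) (j : nat) : R :=
  F (x (n + Z.of_nat (S j))%Z - x n).

(* Both series are finite (converge) and have equal sums.
   (Terms are positive for F = 1/d^2, so the enumeration order is irrelevant.) *)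
Definition in_equilibrium (F : R -> R) (x : Z -> R) (n : Z) : Prop :=
  exists L : R, infinite_sum (left_force F x n) L /\
                infinite_sum (right_force F x n) L.

Definition equilibrium_configuration (F : R -> R) (x : Z -> R) : Prop :=
  configuration x /\ forall n : Z, in_equilibrium F x n.

Definition trivial_configuration (x : Z -> R) : Prop :=
  exists d : R, forall n : Z, x (n + 1)%Z - x n = d.

Definition inverse_square (d : R) : R := 1 / d ^ 2.

From Stdlib Require Import Reals ZArith Lra Lia.
Open Scope R_scope.

(* Shifting the configuration by one period of its tail gives a second equilibrium that
   agrees with it on a right half-line.  Seen from the particles [N + j k] of the periodic
   tail, both exert the same total force from the far left, which after rescaling by the
   period [t] says that two increasing positive sequences satisfy
   [sum_m 1/(u_m + j)^2 = sum_m 1/(w_m + j)^2] for every [j] in [nat].  Taking [r]-th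
   differences in [j] gives positive terms that, as [r] grows, concentrate on the smallest
   [u_m]; hence [u = w] and the configuration is periodic.  In a periodic equilibrium the
   forces on the two ends of a largest gap can only balance if every gap equals it. *)

Lemma infinite_sum_ext f g L :
  (forall i, f i = g i) -> infinite_sum f L -> infinite_sum g L.
Proof.
  intros Hfg Hf e He. destruct (Hf e He) as [N HN]. exists N. intros n Hn.
  rewrite <- (sum_eq f g n) by auto. auto.
Qed.

Lemma infinite_sum_minus f g A B : infinite_sum f A -> infinite_sum g B ->
  infinite_sum (fun i => f i - g i) (A - B).
Proof.
  intros Hf Hg e He. destruct (CV_minus _ _ _ _ Hf Hg e He) as [N HN].
  exists N. intros n Hn. rewrite minus_sum. auto.
Qed.

Lemma infinite_sum_scal_r f A c :
  infinite_sum f A -> infinite_sum (fun i => f i * c) (A * c).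
Proof.
  intros Hf.
  assert (Hc : Un_cv (fun _ => c) c).
  { intros e He. exists 0%nat. intros. unfold Rdist. rewrite Rminus_diag, Rabs_R0. lra. }
  intros e He. destruct (CV_mult _ _ _ _ Hf Hc e He) as [N HN]. exists N. intros n Hn.
  rewrite <- scal_sum, Rmult_comm. auto.
Qed.

Lemma infinite_sum_le f g A B :
  (forall i, f i <= g i) -> infinite_sum f A -> infinite_sum g B -> A <= B.
Proof. intros Hfg. apply Rle_cv_lim. intros n. apply sum_Rle. auto. Qed.

Lemma infinite_sum_partial_le f A :
  (forall i, 0 <= f i) -> infinite_sum f A -> forall n, sum_f_R0 f n <= A.
Proof.
  intros Hf HA. apply growing_ineq; auto. intros n. simpl. specialize (Hf (S n)). lra.
Qed.

Lemma infinite_sum_tail1 f L :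
  infinite_sum f L -> infinite_sum (fun i => f (S i)) (L - f 0%nat).
Proof.
  intros Hf e He. destruct (Hf e He) as [N HN]. exists N. intros n Hn.
  specialize (HN (S n) ltac:(lia)). unfold Rdist in *.
  rewrite decomp_sum in HN by lia. simpl pred in HN.
  replace (sum_f_R0 (fun i => f (S i)) n - (L - f 0%nat))
    with (f 0%nat + sum_f_R0 (fun i => f (S i)) n - L) by ring.
  exact HN.
Qed.

Lemma infinite_sum_tail f L M :
  infinite_sum f L -> infinite_sum (fun i => f (S (M + i))) (L - sum_f_R0 f M).
Proof.
  intros Hf. induction M as [|M IH].
  - exact (infinite_sum_tail1 f L Hf).
  - apply infinite_sum_tail1 in IH. rewrite tech5.
    replace (L - (sum_f_R0 f M + f (S M))) with (L - sum_f_R0 f M - f (S (M + 0))) by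
      (rewrite Nat.add_0_r; ring).
    eapply infinite_sum_ext; [|exact IH]. intros i. simpl. now rewrite <- plus_n_Sm.
Qed.

Lemma infinite_sum_tails_eq f g L p :
  (forall i, (i < p)%nat -> f i = g i) -> infinite_sum f L -> infinite_sum g L ->
  exists S, infinite_sum (fun i => f (p + i)%nat) S /\ infinite_sum (fun i => g (p + i)%nat) S.
Proof.
  revert f g L. induction p as [|p IH]; intros f g L Hfg Hf Hg.
  - exists L. auto.
  - apply (IH (fun i => f (S i)) (fun i => g (S i)) (L - f 0%nat)).
    + intros i Hi. apply Hfg. lia.
    + exact (infinite_sum_tail1 f L Hf).
    + rewrite (Hfg 0%nat) by lia. exact (infinite_sum_tail1 g L Hg).
Qed.

Lemma infinite_sum_le_terms_eq f g L :
  (forall i, f i <= g i) -> infinite_sum f L -> infinite_sum g L -> forall i, f i = g i.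
Proof.
  intros Hfg Hf Hg i.
  set (h := fun j => g j - f j).
  assert (Hh : forall j, 0 <= h j) by (intros j; unfold h; specialize (Hfg j); lra).
  assert (Hsum := infinite_sum_partial_le h (L - L) Hh (infinite_sum_minus _ _ _ _ Hg Hf) i).
  assert (Hterm : h i <= sum_f_R0 h i).
  { destruct i as [|i]; simpl; [lra|].
    assert (0 <= sum_f_R0 h i) by (apply cond_pos_sum; auto). lra. }
  specialize (Hfg i). unfold h in *. lra.
Qed.

Fixpoint inv_sq_diff (r : nat) (d : R) : R :=
  match r with
  | O => / d ^ 2
  | S r => inv_sq_diff r d - inv_sq_diff r (d + 1)
  end.

Fixpoint rising_inv (r : nat) (d : R) : R :=
  match r with
  | O => / d
  | S r => rising_inv r d / (d + INR (S r))
  end.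

Fixpoint harmonic_from (r : nat) (d : R) : R :=
  match r with
  | O => / d
  | S r => harmonic_from r d + / (d + INR (S r))
  end.

Lemma rising_inv_pos r d : 0 < d -> 0 < rising_inv r d.
Proof.
  intros Hd; induction r as [|r IH]; cbn [rising_inv].
  - apply Rinv_0_lt_compat; lra.
  - assert (0 <= INR (S r)) by apply pos_INR. apply Rdiv_lt_0_compat; lra.
Qed.

Lemma harmonic_from_pos r d : 0 < d -> 0 < harmonic_from r d.
Proof.
  intros Hd; induction r as [|r IH]; cbn [harmonic_from].
  - apply Rinv_0_lt_compat; lra.
  - assert (0 <= INR (S r)) by apply pos_INR.
    assert (0 < / (d + INR (S r))) by (apply Rinv_0_lt_compat; lra). lra.
Qed.

Lemma rising_inv_antitone r a b : 0 < a -> a <= b -> rising_inv r b <= rising_inv r a.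
Proof.
  intros Ha Hab; induction r as [|r IH]; cbn [rising_inv].
  - apply Rinv_le_contravar; lra.
  - assert (0 <= INR (S r)) by apply pos_INR.
    assert (0 < rising_inv r b) by (apply rising_inv_pos; lra).
    apply Rmult_le_compat; try lra.
    + left; apply Rinv_0_lt_compat; lra.
    + apply Rinv_le_contravar; lra.
Qed.

Lemma harmonic_from_antitone r a b : 0 < a -> a <= b -> harmonic_from r b <= harmonic_from r a.
Proof.
  intros Ha Hab; induction r as [|r IH]; cbn [harmonic_from].
  - apply Rinv_le_contravar; lra.
  - assert (0 <= INR (S r)) by apply pos_INR.
    assert (/ (b + INR (S r)) <= / (a + INR (S r))) by (apply Rinv_le_contravar; lra). lra.
Qed.

Lemma rising_inv_shift r d : 0 < d -> rising_inv r (d + 1) = d * rising_inv (S r) d.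
Proof.
  intros Hd; induction r as [|r IH].
  - simpl. field. lra.
  - cbn [rising_inv] in *. rewrite IH, (S_INR (S r)).
    assert (0 <= INR (S r)) by apply pos_INR. field. lra.
Qed.

Lemma harmonic_from_shift r d : 0 < d -> harmonic_from r (d + 1) = harmonic_from (S r) d - / d.
Proof.
  intros Hd; induction r as [|r IH].
  - simpl. field. lra.
  - cbn [harmonic_from] in *. rewrite IH, (S_INR (S r)).
    replace (d + 1 + INR (S r)) with (d + (INR (S r) + 1)) by ring. ring.
Qed.

Lemma inv_sq_diff_closed r d : 0 < d ->
  inv_sq_diff r d = INR (fact r) * rising_inv r d * harmonic_from r d.
Proof.
  revert d; induction r as [|r IH]; intros d Hd.
  - simpl. field. lra.
  - cbn [inv_sq_diff]. rewrite !IH by lra.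
    rewrite rising_inv_shift, harmonic_from_shift by lra. cbn [rising_inv harmonic_from].
    rewrite fact_simpl, mult_INR, S_INR.
    assert (0 <= INR r) by apply pos_INR. field. lra.
Qed.

Lemma inv_sq_diff_pos r d : 0 < d -> 0 < inv_sq_diff r d.
Proof.
  intros Hd. rewrite inv_sq_diff_closed by lra.
  apply Rmult_lt_0_compat; [apply Rmult_lt_0_compat|];
    auto using INR_fact_lt_0, rising_inv_pos, harmonic_from_pos.
Qed.

Lemma inv_sq_diff_le_ratio r a b : 0 < a -> a <= b ->
  inv_sq_diff r b <= inv_sq_diff r a * (rising_inv r b / rising_inv r a).
Proof.
  intros Ha Hab. rewrite !inv_sq_diff_closed by lra.
  assert (0 < rising_inv r a) by (apply rising_inv_pos; lra).
  assert (0 < rising_inv r b) by (apply rising_inv_pos; lra).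
  assert (harmonic_from r b <= harmonic_from r a) by (apply harmonic_from_antitone; lra).
  assert (0 < INR (fact r)) by apply INR_fact_lt_0.
  replace (INR (fact r) * rising_inv r a * harmonic_from r a * (rising_inv r b / rising_inv r a))
    with (INR (fact r) * rising_inv r b * harmonic_from r a) by (field; lra).
  apply Rmult_le_compat_l; [|auto]. left. apply Rmult_lt_0_compat; auto.
Qed.

Lemma rising_ratio_succ r a b : 0 < a -> 0 < b ->
  rising_inv (S r) b / rising_inv (S r) a
  = rising_inv r b / rising_inv r a * ((a + INR (S r)) / (b + INR (S r))).
Proof.
  intros Ha Hb. cbn [rising_inv].
  assert (0 <= INR (S r)) by apply pos_INR.
  assert (0 < rising_inv r a) by (apply rising_inv_pos; lra).
  field. repeat split; lra.
Qed.

Lemma rising_ratio_succ_le r a b : 0 < a -> a <= b ->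
  rising_inv (S r) b / rising_inv (S r) a <= rising_inv r b / rising_inv r a.
Proof.
  intros Ha Hab. rewrite rising_ratio_succ by lra.
  assert (0 <= INR (S r)) by apply pos_INR.
  assert (0 < rising_inv r a) by (apply rising_inv_pos; lra).
  assert (0 < rising_inv r b) by (apply rising_inv_pos; lra).
  assert (0 < rising_inv r b / rising_inv r a) by (apply Rdiv_lt_0_compat; lra).
  assert ((a + INR (S r)) / (b + INR (S r)) <= 1).
  { apply Rmult_le_reg_r with (b + INR (S r)); [lra|].
    unfold Rdiv. rewrite Rmult_assoc, Rinv_l by lra. lra. }
  nra.
Qed.

Lemma rising_ratio_le_inv_sq r a b : 0 < a -> a <= b ->
  rising_inv (S r) b / rising_inv (S r) a <= a * (a + 1) / b ^ 2.
Proof.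
  intros Ha Hab. induction r as [|r IH].
  - cbn [rising_inv]. change (INR 1) with 1.
    replace (/ b / (b + 1) / (/ a / (a + 1))) with (a * (a + 1) / (b * (b + 1))) by (field; lra).
    unfold Rdiv. apply Rmult_le_compat_l; [nra|].
    apply Rinv_le_contravar; nra.
  - eapply Rle_trans; [apply rising_ratio_succ_le; lra | exact IH].
Qed.

Lemma bernoulli_ineq p h : 0 <= h -> 1 + INR p * h <= (1 + h) ^ p.
Proof.
  intros Hh; induction p as [|p IH]; [simpl; lra|].
  rewrite S_INR; simpl pow.
  assert (0 <= INR p) by apply pos_INR.
  assert (0 <= INR p * h * h) by (apply Rmult_le_pos; [apply Rmult_le_pos|]; lra).
  nra.
Qed.

Lemma pow_frac_le p x e : 0 < x -> 0 < e -> 1 <= INR p * e ->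
  (x / (x + e)) ^ p <= x / (x + 1).
Proof.
  intros Hx He Hp.
  assert (Hinv : x / (x + e) = / (1 + e / x)) by (field; lra).
  assert (Hb := bernoulli_ineq p (e / x) ltac:(apply Rlt_le, Rdiv_lt_0_compat; lra)).
  assert (H1 : 1 + / x <= 1 + INR p * (e / x)).
  { unfold Rdiv. rewrite <- Rmult_assoc. assert (0 < / x) by (apply Rinv_0_lt_compat; lra). nra. }
  rewrite Hinv, pow_inv.
  replace (x / (x + 1)) with (/ (1 + / x)) by (field; lra).
  apply Rinv_le_contravar; [|lra].
  assert (0 < / x) by (apply Rinv_0_lt_compat; lra). lra.
Qed.

(* Each factor [(a+i)/(a+e+i)] of the ratio, raised to a power [p] with [p e >= 1],
   is below [(a+i)/(a+i+1)], and these bounds telescope. *)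
Lemma rising_ratio_pow_le p a e r : 0 < a -> 0 < e -> 1 <= INR p * e ->
  (rising_inv r (a + e) / rising_inv r a) ^ p <= a / (a + INR r + 1).
Proof.
  intros Ha He Hp. induction r as [|r IH].
  - cbn [rising_inv]. simpl INR.
    replace (/ (a + e) / / a) with (a / (a + e)) by (field; lra).
    replace (a + 0 + 1) with (a + 1) by ring. apply pow_frac_le; auto.
  - rewrite rising_ratio_succ by lra.
    replace (a + e + INR (S r)) with (a + INR (S r) + e) by ring.
    rewrite Rpow_mult_distr.
    assert (0 <= INR (S r)) by apply pos_INR.
    assert (0 < rising_inv r a) by (apply rising_inv_pos; lra).
    assert (0 < rising_inv r (a + e)) by (apply rising_inv_pos; lra).
    assert (0 <= (rising_inv r (a + e) / rising_inv r a) ^ p)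
      by (apply pow_le, Rlt_le, Rdiv_lt_0_compat; lra).
    apply Rle_trans with (a / (a + INR r + 1) * ((a + INR (S r)) / (a + INR (S r) + 1))).
    + apply Rmult_le_compat; auto.
      * apply pow_le, Rlt_le, Rdiv_lt_0_compat; lra.
      * apply pow_frac_le; lra.
    + rewrite S_INR. assert (0 <= INR r) by apply pos_INR. right. field. lra.
Qed.

Lemma rising_ratio_vanishes a b eta : 0 < a -> a < b -> 0 < eta ->
  exists r, rising_inv r b / rising_inv r a < eta.
Proof.
  intros Ha Hab Heta.
  destruct (INR_unbounded (/ (b - a))) as [p Hp].
  assert (Hpe : 1 <= INR p * (b - a)).
  { apply Rmult_le_reg_r with (/ (b - a)); [apply Rinv_0_lt_compat; lra|].
    rewrite Rmult_assoc, Rinv_r by lra. lra. }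
  assert (Hep : 0 < eta ^ p) by (apply pow_lt; lra).
  destruct (INR_unbounded (a / eta ^ p)) as [r Hr].
  exists r. apply Rnot_le_lt. intros Hle.
  assert (Hpow := rising_ratio_pow_le p a (b - a) r Ha ltac:(lra) Hpe).
  replace (a + (b - a)) with b in Hpow by ring.
  assert (eta ^ p <= (rising_inv r b / rising_inv r a) ^ p) by (apply pow_incr; lra).
  assert (Hr' : a < eta ^ p * INR r).
  { apply Rmult_lt_reg_r with (/ eta ^ p); [apply Rinv_0_lt_compat; lra|].
    rewrite (Rmult_comm (eta ^ p)), Rmult_assoc, Rinv_r by lra. lra. }
  assert (a / (a + INR r + 1) < eta ^ p).
  { assert (0 <= INR r) by apply pos_INR.
    apply Rmult_lt_reg_r with (a + INR r + 1); [lra|].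
    unfold Rdiv. rewrite Rmult_assoc, Rinv_l by lra. nra. }
  lra.
Qed.

Definition same_shifted_inv_sq_sums (u v : nat -> R) : Prop :=
  forall j : nat, exists S, infinite_sum (fun m => / (u m + INR j) ^ 2) S /\
                            infinite_sum (fun m => / (v m + INR j) ^ 2) S.

Lemma same_shifted_inv_sq_sums_sym u v :
  same_shifted_inv_sq_sums u v -> same_shifted_inv_sq_sums v u.
Proof. intros Huv j. destruct (Huv j) as [S [Hu Hv]]. exists S. auto. Qed.

Lemma same_shifted_inv_sq_sums_tail u v : u 0%nat = v 0%nat ->
  same_shifted_inv_sq_sums u v ->
  same_shifted_inv_sq_sums (fun m => u (S m)) (fun m => v (S m)).
Proof.
  intros H0 Huv j. destruct (Huv j) as [S [Hu Hv]].
  exists (S - / (u 0%nat + INR j) ^ 2). split.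
  - exact (infinite_sum_tail1 _ _ Hu).
  - rewrite H0. exact (infinite_sum_tail1 _ _ Hv).
Qed.

Lemma same_shifted_inv_sq_sums_diff u v r : same_shifted_inv_sq_sums u v ->
  exists S, infinite_sum (fun m => inv_sq_diff r (u m)) S /\
            infinite_sum (fun m => inv_sq_diff r (v m)) S.
Proof.
  intros Huv.
  cut (forall j : nat, exists S, infinite_sum (fun m => inv_sq_diff r (u m + INR j)) S /\
                                 infinite_sum (fun m => inv_sq_diff r (v m + INR j)) S).
  { intros H. destruct (H 0%nat) as [S [Hu Hv]]. exists S. simpl INR in Hu, Hv.
    split; [eapply infinite_sum_ext; [|exact Hu] | eapply infinite_sum_ext; [|exact Hv]];
      intros m; cbv beta; now rewrite Rplus_0_r. }
  induction r as [|r IH]; intros j; [exact (Huv j)|].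
  destruct (IH j) as [S1 [Hu1 Hv1]], (IH (S j)) as [S2 [Hu2 Hv2]].
  exists (S1 - S2). rewrite S_INR in Hu2, Hv2.
  split; [eapply infinite_sum_ext; [|exact (infinite_sum_minus _ _ _ _ Hu1 Hu2)]
        | eapply infinite_sum_ext; [|exact (infinite_sum_minus _ _ _ _ Hv1 Hv2)]];
    intros m; cbn [inv_sq_diff]; now rewrite Rplus_assoc.
Qed.

Lemma inv_sq_diff_le_of_ratio r a b d eta : 0 < a -> a <= b -> b <= d ->
  rising_inv r b / rising_inv r a <= eta -> inv_sq_diff (S r) d <= inv_sq_diff (S r) a * eta.
Proof.
  intros Ha Hab Hbd Hr.
  eapply Rle_trans; [apply (inv_sq_diff_le_ratio (S r) a); lra|].
  apply Rmult_le_compat_l; [left; apply inv_sq_diff_pos; lra|].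
  assert (0 < rising_inv (S r) a) by (apply rising_inv_pos; lra).
  assert (rising_inv (S r) d <= rising_inv (S r) b) by (apply rising_inv_antitone; lra).
  assert (rising_inv (S r) b / rising_inv (S r) a <= rising_inv r b / rising_inv r a)
    by (apply rising_ratio_succ_le; lra).
  assert (rising_inv (S r) d / rising_inv (S r) a <= rising_inv (S r) b / rising_inv (S r) a).
  { unfold Rdiv. apply Rmult_le_compat_r; [left; apply Rinv_0_lt_compat|]; lra. }
  lra.
Qed.

Lemma inv_sq_diff_le_inv_sq r a d : 0 < a -> a <= d ->
  inv_sq_diff (S r) d <= / d ^ 2 * (inv_sq_diff (S r) a * (a * (a + 1))).
Proof.
  intros Ha Had.
  eapply Rle_trans; [apply (inv_sq_diff_le_ratio (S r) a); lra|].
  assert (Hrat := rising_ratio_le_inv_sq r a d Ha Had).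
  assert (0 < inv_sq_diff (S r) a) by (apply inv_sq_diff_pos; lra).
  unfold Rdiv in Hrat. rewrite (Rmult_comm (/ d ^ 2)), Rmult_assoc.
  apply Rmult_le_compat_l; lra.
Qed.

(* The leading term dominates: for high orders [r] the differences at points [>= b]
   are negligible against the one at [a < b], except for a tail controlled by the
   convergence of [sum 1/v_m^2]. *)
Lemma inv_sq_diff_sum_lt a v S0 : 0 < a -> a < v 0%nat -> Un_growing v ->
  infinite_sum (fun m => / v m ^ 2) S0 ->
  exists r, forall L, infinite_sum (fun m => inv_sq_diff r (v m)) L -> L < inv_sq_diff r a.
Proof.
  intros Ha Hav Hv HS0.
  assert (Hvb : forall m, v 0%nat <= v m) by (intros m; apply Rge_le, growing_prop; auto; lia).
  set (c := a * (a + 1)).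
  assert (Hc : 0 < c) by (unfold c; nra).
  destruct (HS0 (/ (3 * c))) as [M HM]; [apply Rinv_0_lt_compat; lra|].
  specialize (HM M (le_n M)). unfold Rdist in HM. apply Rabs_def2 in HM.
  assert (HSM : 0 < INR (S M)) by (apply lt_0_INR; lia).
  destruct (rising_ratio_vanishes a (v 0%nat) (/ (3 * INR (S M)))) as [r Hr];
    [lra | lra | apply Rinv_0_lt_compat; lra|].
  exists (S r). intros L HL.
  set (Da := inv_sq_diff (S r) a).
  assert (HDa : 0 < Da) by (apply inv_sq_diff_pos; lra).
  assert (Hhead : sum_f_R0 (fun m => inv_sq_diff (S r) (v m)) M <= Da / 3).
  { apply Rle_trans with (sum_f_R0 (fun _ => Da * / (3 * INR (S M))) M).
    - apply sum_Rle. intros m _. apply (inv_sq_diff_le_of_ratio r a (v 0%nat)); auto; lra.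
    - rewrite sum_cte. right. field. lra. }
  assert (Htail : L - sum_f_R0 (fun m => inv_sq_diff (S r) (v m)) M
                  <= (S0 - sum_f_R0 (fun m => / v m ^ 2) M) * (Da * c)).
  { refine (infinite_sum_le _ _ _ _ _ (infinite_sum_tail _ _ M HL)
             (infinite_sum_scal_r _ _ (Da * c) (infinite_sum_tail _ _ M HS0))).
    intros i. apply inv_sq_diff_le_inv_sq; [lra|]. specialize (Hvb (S (M + i))). lra. }
  assert ((S0 - sum_f_R0 (fun m => / v m ^ 2) M) * c < / 3).
  { apply Rlt_le_trans with (/ (3 * c) * c); [apply Rmult_lt_compat_r; lra|].
    right. field. lra. }
  nra.
Qed.

Lemma same_shifted_inv_sq_sums_head u v : 0 < u 0%nat -> Un_growing u -> Un_growing v ->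
  same_shifted_inv_sq_sums u v -> v 0%nat <= u 0%nat.
Proof.
  intros Hu0 Hu Hv Huv. apply Rnot_lt_le. intros Hlt.
  destruct (Huv 0%nat) as [S0 [_ HS0]]. simpl INR in HS0.
  assert (HS0' : infinite_sum (fun m => / v m ^ 2) S0)
    by (eapply infinite_sum_ext; [|exact HS0]; intros m; simpl; now rewrite Rplus_0_r).
  destruct (inv_sq_diff_sum_lt (u 0%nat) v S0 Hu0 Hlt Hv HS0') as [r Hr].
  destruct (same_shifted_inv_sq_sums_diff u v r Huv) as [S [HSu HSv]].
  assert (Hpos : forall m, 0 <= inv_sq_diff r (u m)).
  { intros m. left. apply inv_sq_diff_pos.
    assert (u 0%nat <= u m) by (apply Rge_le, growing_prop; auto; lia). lra. }
  assert (Hfirst := infinite_sum_partial_le _ _ Hpos HSu 0%nat).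
  specialize (Hr S HSv). simpl in Hfirst. lra.
Qed.

Theorem same_shifted_inv_sq_sums_eq u v : 0 < u 0%nat -> 0 < v 0%nat ->
  Un_growing u -> Un_growing v -> same_shifted_inv_sq_sums u v -> forall m, u m = v m.
Proof.
  intros Hu0 Hv0 Hu Hv Huv m. revert u v Hu0 Hv0 Hu Hv Huv.
  induction m as [|m IH]; intros u v Hu0 Hv0 Hu Hv Huv.
  - apply Rle_antisym; apply same_shifted_inv_sq_sums_head;
      auto using same_shifted_inv_sq_sums_sym.
  - assert (H0 : u 0%nat = v 0%nat)
      by (apply Rle_antisym; apply same_shifted_inv_sq_sums_head;
          auto using same_shifted_inv_sq_sums_sym).
    apply (IH (fun i => u (S i)) (fun i => v (S i))).
    + specialize (Hu 0%nat). lra.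
    + specialize (Hv 0%nat). lra.
    + intros i. apply Hu.
    + intros i. apply Hv.
    + apply same_shifted_inv_sq_sums_tail; auto.
Qed.

Lemma configuration_lt x : configuration x -> forall m n, (m < n)%Z -> x m < x n.
Proof.
  intros Hx m n Hmn.
  assert (Hstep : forall p : nat, x m < x (m + 1 + Z.of_nat p)%Z).
  { induction p as [|p IH].
    - specialize (Hx (m + 1)%Z). rewrite Z.add_0_r. now replace (m + 1 - 1)%Z with m in Hx by lia.
    - specialize (Hx (m + 1 + Z.of_nat (S p))%Z).
      replace (m + 1 + Z.of_nat (S p) - 1)%Z with (m + 1 + Z.of_nat p)%Z in Hx by lia. lra. }
  specialize (Hstep (Z.to_nat (n - m - 1))).
  now replace (m + 1 + Z.of_nat (Z.to_nat (n - m - 1)))%Z with n in Hstep by lia.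
Qed.

Lemma inverse_square_eq d : inverse_square d = / d ^ 2.
Proof. unfold inverse_square, Rdiv. ring. Qed.

Lemma inverse_square_decreasing d e : 0 < d < e -> inverse_square e < inverse_square d.
Proof.
  intros Hde. rewrite !inverse_square_eq.
  apply Rinv_lt_contravar; [apply Rmult_lt_0_compat; apply pow_lt|]; simpl; nra.
Qed.

Lemma equilibrium_shift F x k t : equilibrium_configuration F x ->
  equilibrium_configuration F (fun n => x (n + k)%Z - t).
Proof.
  intros [Hc He]. split.
  - intros n. specialize (Hc (n + k)%Z). replace (n - 1 + k)%Z with (n + k - 1)%Z by lia. lra.
  - intros n. destruct (He (n + k)%Z) as [L [Hl Hr]]. exists L. split.
    + eapply infinite_sum_ext; [|exact Hl]. intros j. unfold left_force. f_equal.
      replace (n - Z.of_nat (S j) + k)%Z with (n + k - Z.of_nat (S j))%Z by lia. ring.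
    + eapply infinite_sum_ext; [|exact Hr]. intros j. unfold right_force. f_equal.
      replace (n + Z.of_nat (S j) + k)%Z with (n + k + Z.of_nat (S j))%Z by lia. ring.
Qed.

Lemma equilibrium_reflect F x : equilibrium_configuration F x ->
  equilibrium_configuration F (fun n => - x (- n)%Z).
Proof.
  intros [Hc He]. split.
  - intros n. specialize (Hc (- n + 1)%Z). replace (- n + 1 - 1)%Z with (- n)%Z in Hc by lia.
    replace (- (n - 1))%Z with (- n + 1)%Z by lia. lra.
  - intros n. destruct (He (- n)%Z) as [L [Hl Hr]]. exists L. split.
    + eapply infinite_sum_ext; [|exact Hr]. intros j. unfold left_force, right_force. f_equal.
      replace (- (n - Z.of_nat (S j)))%Z with (- n + Z.of_nat (S j))%Z by lia. ring.
    + eapply infinite_sum_ext; [|exact Hl]. intros j. unfold left_force, right_force. f_equal.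
      replace (- (n + Z.of_nat (S j)))%Z with (- n - Z.of_nat (S j))%Z by lia. ring.
Qed.

Lemma trivial_configuration_reflect x :
  trivial_configuration (fun n => - x (- n)%Z) -> trivial_configuration x.
Proof.
  intros [d Hd]. exists d. intros n. specialize (Hd (- n - 1)%Z).
  replace (- (- n - 1 + 1))%Z with n in Hd by lia.
  replace (- (- n - 1))%Z with (n + 1)%Z in Hd by lia. lra.
Qed.

Lemma periodic_add_mul (g : Z -> R) k : (forall n, g (n + k)%Z = g n) ->
  forall q n, g (n + k * q)%Z = g n.
Proof.
  intros Hg.
  assert (Hnat : forall (q : nat) n, g (n + k * Z.of_nat q)%Z = g n).
  { induction q as [|q IH]; intros n; [f_equal; lia|].
    replace (n + k * Z.of_nat (S q))%Z with (n + k * Z.of_nat q + k)%Z by lia.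
    rewrite Hg. apply IH. }
  intros q n. destruct (Z_le_gt_dec 0 q).
  - replace q with (Z.of_nat (Z.to_nat q)) by lia. apply Hnat.
  - rewrite <- (Hnat (Z.to_nat (- q)) (n + k * q)%Z). f_equal. lia.
Qed.

Lemma periodic_attains_max (g : Z -> R) k : (1 <= k)%Z -> (forall n, g (n + k)%Z = g n) ->
  exists n0, forall n, g n <= g n0.
Proof.
  intros Hk Hg.
  assert (Hfin : forall K : nat, exists r0, forall r : nat, (r <= K)%nat ->
                   g (Z.of_nat r) <= g (Z.of_nat r0)).
  { induction K as [|K [r0 Hr0]].
    - exists 0%nat. intros r Hr. replace r with 0%nat by lia. lra.
    - destruct (Rle_dec (g (Z.of_nat (S K))) (g (Z.of_nat r0))) as [Hle|Hgt].
      + exists r0. intros r Hr. destruct (Nat.eq_dec r (S K)); [subst; auto | apply Hr0; lia].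
      + exists (S K). intros r Hr. destruct (Nat.eq_dec r (S K)); [subst; lra|].
        specialize (Hr0 r ltac:(lia)). lra. }
  destruct (Hfin (Z.to_nat (k - 1))) as [r0 Hr0]. exists (Z.of_nat r0). intros n.
  rewrite <- (periodic_add_mul g k Hg (- (n / k)) n).
  assert (0 <= n mod k < k)%Z by (apply Z.mod_pos_bound; lia).
  assert (n = k * (n / k) + n mod k)%Z by (apply Z.div_mod; lia).
  replace (n + k * - (n / k))%Z with (Z.of_nat (Z.to_nat (n mod k))) by lia.
  apply Hr0. lia.
Qed.

Definition gap (x : Z -> R) (n : Z) : R := x (n + 1)%Z - x n.

Section DecreasingForce.

Variable F : R -> R.
Hypothesis F_decreasing : forall d e, 0 < d < e -> F e < F d.

Lemma force_antitone d e : 0 < d -> d <= e -> F e <= F d.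
Proof. intros Hd [Hde|<-]; [left; apply F_decreasing; lra | lra]. Qed.

Lemma force_inj d e : 0 < d -> 0 < e -> F d = F e -> d = e.
Proof.
  intros Hd He HF. destruct (Rtotal_order d e) as [Hlt|[Heq|Hgt]]; auto.
  - assert (F e < F d) by (apply F_decreasing; lra). lra.
  - assert (F d < F e) by (apply F_decreasing; lra). lra.
Qed.

(* Compare the particles on both sides of a largest gap [x_{n0+1} - x_{n0}]: every
   distance seen from [n0+1] to the left, and from [n0] to the right, is at least the
   corresponding one from the other particle, so the two equilibria force equality. *)
Lemma equilibrium_gaps_left_of_max x n0 : equilibrium_configuration F x ->
  (forall n, gap x n <= gap x n0) -> forall j : nat, gap x (n0 - Z.of_nat (S j))%Z = gap x n0.
Proof.
  intros [Hc He] Hmax.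
  assert (Hlt := configuration_lt x Hc).
  assert (Hleft_dist : forall j : nat, x (n0 + 1)%Z - x (n0 + 1 - Z.of_nat (S j))%Z
            = x n0 - x (n0 - Z.of_nat (S j))%Z + (gap x n0 - gap x (n0 - Z.of_nat (S j))%Z)).
  { intros j. unfold gap.
    replace (n0 - Z.of_nat (S j) + 1)%Z with (n0 + 1 - Z.of_nat (S j))%Z by lia. ring. }
  assert (Hleft : forall j, left_force F x (n0 + 1)%Z j <= left_force F x n0 j).
  { intros j. unfold left_force. rewrite Hleft_dist. apply force_antitone.
    - assert (x (n0 - Z.of_nat (S j))%Z < x n0) by (apply Hlt; lia). lra.
    - specialize (Hmax (n0 - Z.of_nat (S j))%Z). lra. }
  assert (Hright : forall j, right_force F x n0 j <= right_force F x (n0 + 1)%Z j).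
  { intros j. unfold right_force. apply force_antitone.
    - assert (x (n0 + 1)%Z < x (n0 + 1 + Z.of_nat (S j))%Z) by (apply Hlt; lia). lra.
    - specialize (Hmax (n0 + Z.of_nat (S j))%Z). unfold gap in Hmax |- *.
      replace (n0 + Z.of_nat (S j) + 1)%Z with (n0 + 1 + Z.of_nat (S j))%Z in Hmax by lia.
      lra. }
  destruct (He n0) as [L0 [Hl0 Hr0]], (He (n0 + 1)%Z) as [L1 [Hl1 Hr1]].
  assert (L1 = L0).
  { assert (L1 <= L0) by exact (infinite_sum_le _ _ _ _ Hleft Hl1 Hl0).
    assert (L0 <= L1) by exact (infinite_sum_le _ _ _ _ Hright Hr0 Hr1). lra. }
  subst L1. intros j.
  assert (Hj := infinite_sum_le_terms_eq _ _ _ Hleft Hl1 Hl0 j).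
  unfold left_force in Hj. rewrite Hleft_dist in Hj.
  assert (x (n0 - Z.of_nat (S j))%Z < x n0) by (apply Hlt; lia).
  specialize (Hmax (n0 - Z.of_nat (S j))%Z).
  apply force_inj in Hj; lra.
Qed.

Lemma periodic_equilibrium_trivial x k t : equilibrium_configuration F x -> (1 <= k)%Z ->
  (forall n, x (n + k)%Z = x n + t) -> trivial_configuration x.
Proof.
  intros Hx Hk Hper.
  assert (Hg : forall n, gap x (n + k)%Z = gap x n).
  { intros n. unfold gap. replace (n + k + 1)%Z with (n + 1 + k)%Z by lia. rewrite !Hper. ring. }
  destruct (periodic_attains_max (gap x) k Hk Hg) as [n0 Hmax].
  assert (Hgaps := equilibrium_gaps_left_of_max x n0 Hx Hmax).
  exists (gap x n0). intros n. fold (gap x n).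
  set (q := (Z.abs (n - n0) + 1)%Z).
  rewrite <- (periodic_add_mul (gap x) k Hg (- q) n).
  replace (n + k * - q)%Z with (n0 - Z.of_nat (S (Z.to_nat (n0 - 1 - (n + k * - q)))))%Z.
  - apply Hgaps.
  - assert (k * q >= q)%Z by nia. lia.
Qed.

End DecreasingForce.

(* Seen from a particle [n >= N], two equilibria agreeing on [[N, oo)] have the same
   right force and the same first [n - N] left terms, hence the same pull from [(-oo, N)]. *)
Lemma equilibria_far_left_sums_eq F x z N n :
  equilibrium_configuration F x -> equilibrium_configuration F z ->
  (forall m, (N <= m)%Z -> x m = z m) -> (N <= n)%Z ->
  exists S, infinite_sum (fun i => F (x n - x (N - 1 - Z.of_nat i)%Z)) S /\
            infinite_sum (fun i => F (x n - z (N - 1 - Z.of_nat i)%Z)) S.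
Proof.
  intros [_ Hx] [_ Hz] Hxz Hn.
  destruct (Hx n) as [L [Hxl Hxr]], (Hz n) as [L' [Hzl Hzr]].
  assert (L' = L).
  { apply (uniqueness_sum (right_force F x n)); auto.
    eapply infinite_sum_ext; [|exact Hzr]. intros j. unfold right_force. rewrite !Hxz by lia. auto. }
  subst L'. set (p := Z.to_nat (n - N)).
  assert (Hnear : forall i, (i < p)%nat -> left_force F x n i = left_force F z n i).
  { intros i Hi. unfold left_force, p in *. rewrite !Hxz by lia. reflexivity. }
  destruct (infinite_sum_tails_eq _ _ L p Hnear Hxl Hzl) as [S [Hxs Hzs]].
  exists S. split.
  - eapply infinite_sum_ext; [|exact Hxs]. intros i. unfold left_force.
    do 3 f_equal. lia.
  - eapply infinite_sum_ext; [|exact Hzs]. intros i. unfold left_force.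
    rewrite (Hxz n) by lia. do 3 f_equal. lia.
Qed.

Lemma periodic_tail_iter x N k t : (0 <= k)%Z ->
  (forall n, (N <= n)%Z -> x (n + k)%Z = x n + t) ->
  forall j : nat, x (N + Z.of_nat j * k)%Z = x N + INR j * t.
Proof.
  intros Hk Hper. induction j as [|j IH]; [rewrite Z.add_0_r; simpl; ring|].
  rewrite S_INR. replace (N + Z.of_nat (S j) * k)%Z with (N + Z.of_nat j * k + k)%Z by lia.
  rewrite Hper, IH by lia. ring.
Qed.

Lemma inverse_square_rescale d s t : 0 < t -> 0 < d -> 0 <= s ->
  inverse_square (d + s * t) * t ^ 2 = / (d / t + s) ^ 2.
Proof.
  intros Ht Hd Hs. rewrite inverse_square_eq.
  assert (0 < d / t) by (apply Rdiv_lt_0_compat; lra).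
  replace (d + s * t) with (t * (d / t + s)) by (field; lra).
  field. split; [lra | nra].
Qed.

Lemma scaled_left_distances_growing (y : Z -> R) N c t : 0 < t ->
  (forall m n, (m < n)%Z -> y m < y n) ->
  Un_growing (fun i : nat => (c - y (N - 1 - Z.of_nat i)%Z) / t).
Proof.
  intros Ht Hy i. apply Rmult_le_compat_r; [left; apply Rinv_0_lt_compat; lra|].
  assert (y (N - 1 - Z.of_nat (S i))%Z < y (N - 1 - Z.of_nat i)%Z) by (apply Hy; lia). lra.
Qed.

(* At the particles [N + j k] the far-left sums, rescaled by [t^2], become
   [sum_m 1 / (u_m + j)^2] with [u_m = (x_N - x_{N-1-m}) / t]. *)
Lemma equilibrium_eq_of_periodic_tail x z N k t :
  equilibrium_configuration inverse_square x -> equilibrium_configuration inverse_square z ->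
  (1 <= k)%Z -> 0 < t -> (forall n, (N <= n)%Z -> x (n + k)%Z = x n + t) ->
  (forall m, (N <= m)%Z -> x m = z m) -> forall n, x n = z n.
Proof.
  intros Hx Hz Hk Ht Hper Hxz.
  assert (Hxlt := configuration_lt x (proj1 Hx)). assert (Hzlt := configuration_lt z (proj1 Hz)).
  set (u := fun i : nat => (x N - x (N - 1 - Z.of_nat i)%Z) / t).
  set (w := fun i : nat => (x N - z (N - 1 - Z.of_nat i)%Z) / t).
  assert (Hrescale : forall y : Z -> R, (forall i, y (N - 1 - Z.of_nat i)%Z < x N) ->
            forall (j i : nat),
            inverse_square (x (N + Z.of_nat j * k)%Z - y (N - 1 - Z.of_nat i)%Z) * t ^ 2
            = / ((x N - y (N - 1 - Z.of_nat i)%Z) / t + INR j) ^ 2).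
  { intros y Hy j i. rewrite (periodic_tail_iter x N k t) by (auto; lia).
    specialize (Hy i). rewrite <- inverse_square_rescale by (auto using pos_INR; lra).
    f_equal. f_equal. ring. }
  assert (Hxy : forall i, x (N - 1 - Z.of_nat i)%Z < x N) by (intros i; apply Hxlt; lia).
  assert (Hzy : forall i, z (N - 1 - Z.of_nat i)%Z < x N)
    by (intros i; rewrite (Hxz N) by lia; apply Hzlt; lia).
  assert (Hsums : same_shifted_inv_sq_sums u w).
  { intros j.
    destruct (equilibria_far_left_sums_eq inverse_square x z N (N + Z.of_nat j * k)%Z Hx Hz Hxz
                ltac:(lia)) as [S [HSx HSz]].
    exists (S * t ^ 2). split.
    - eapply infinite_sum_ext; [|exact (infinite_sum_scal_r _ _ _ HSx)].
      intros i. apply (Hrescale x Hxy).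
    - eapply infinite_sum_ext; [|exact (infinite_sum_scal_r _ _ _ HSz)].
      intros i. apply (Hrescale z Hzy). }
  assert (Hu0 : 0 < u 0%nat) by (specialize (Hxy 0%nat); apply Rdiv_lt_0_compat; lra).
  assert (Hw0 : 0 < w 0%nat) by (specialize (Hzy 0%nat); apply Rdiv_lt_0_compat; lra).
  assert (Huw := same_shifted_inv_sq_sums_eq u w Hu0 Hw0
                   (scaled_left_distances_growing x N (x N) t Ht Hxlt)
                   (scaled_left_distances_growing z N (x N) t Ht Hzlt) Hsums).
  intros n. destruct (Z_le_gt_dec N n) as [Hn|Hn]; [auto|].
  specialize (Huw (Z.to_nat (N - 1 - n))). unfold u, w in Huw.
  replace (N - 1 - Z.of_nat (Z.to_nat (N - 1 - n)))%Z with n in Huw by lia.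
  unfold Rdiv in Huw. apply Rmult_eq_reg_r in Huw; [lra|].
  apply Rinv_neq_0_compat. lra.
Qed.

Lemma right_periodic_tail_trivial x N k t :
  equilibrium_configuration inverse_square x -> (1 <= k)%Z -> 0 < t ->
  (forall n, (N <= n)%Z -> x (n + k)%Z = x n + t) -> trivial_configuration x.
Proof.
  intros Hx Hk Ht Hper.
  set (z := fun n => x (n + k)%Z - t).
  assert (Hxz : forall n, x n = z n).
  { apply (equilibrium_eq_of_periodic_tail x z N k t Hx (equilibrium_shift _ x k t Hx) Hk Ht Hper).
    intros m Hm. unfold z. rewrite Hper by auto. ring. }
  apply (periodic_equilibrium_trivial inverse_square inverse_square_decreasing x k t Hx Hk).
  intros n. rewrite (Hxz n). unfold z. ring.
Qed.

Theorem mainTheorem5 (x : Z -> R)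
  (Heq : equilibrium_configuration inverse_square x)
  (Hud : uniformly_discrete x)
  (Htail : exists (N k : Z) (t : R), (1 <= k)%Z /\ 0 < t /\
     ((forall n : Z, (N <= n)%Z -> x (n + k)%Z = x n + t) \/
      (forall n : Z, (n <= N)%Z -> x (n + k)%Z = x n + t))) :
  trivial_configuration x.
Proof.
  destruct Htail as (N & k & t & Hk & Ht & [Hright|Hleft]).
  - exact (right_periodic_tail_trivial x N k t Heq Hk Ht Hright).
  - apply trivial_configuration_reflect.
    apply (right_periodic_tail_trivial _ (- N - k)%Z k t (equilibrium_reflect _ x Heq) Hk Ht).
    intros n Hn. specialize (Hleft (- n - k)%Z ltac:(lia)).
    replace (- n - k + k)%Z with (- n)%Z in Hleft by lia.
    replace (- (n + k))%Z with (- n - k)%Z by lia. lra.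
Qed.
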